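(* Assume (a1)–(a3) with constants $L,\beta$, let $l\in\mathbb{R}$ be such that $F+\frac l2\|\cdot\|^2$ is convex, and let $\gamma>0$ satisfy $\Lambda(\gamma)>0$. Suppose $F$, $G$ and $H$ are each bounded below and at least one of them is coercive (i.e. $\liminf_{\|x\|\to\infty}f(x)=\infty$). Then every sequence $\{(x^t,y^t,z^t)\}$ generated by the DYS iteration is bounded.
   Context: Assumptions: (a1) $F:\mathbb{R}^n\to\mathbb{R}$ is differentiable with $L$-Lipschitz gradient; (a2) $G:\mathbb{R}^n\to(-\infty,\infty]$ is proper, lower semicontinuous, and $\arg\min_y\{G(y)+\frac1{2\gamma}\|y-x\|^2\}\neq\emptyset$ for all $x$ and $\gamma>0$; (a3) $H:\mathbb{R}^n\to\mathbb{R}$ is differentiable with $\beta$-Lipschitz gradient. DYS iteration: fix $\gamma>0$, $x^0$; for $t\ge0$, $y^{t+1}\in\arg\min_y\{F(y)+\frac{1}{2\gamma}\|y-x^t\|^2\}$, $z^{t+1}\in\arg\min_z\{G(z)+\frac{1}{2\gamma}\|z-(2y^{t+1}-\gamma\nabla H(y^{t+1})-x^t)\|^2\}$, $x^{t+1}=x^t+(z^{t+1}-y^{t+1})$. $\Lambda(\gamma)=\tfrac12(\tfrac1\gamma-l)-\beta-(\tfrac1\gamma+\tfrac\beta2)[(-1+2\gamma l)+(1+\gamma L)^2]$. *)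

From HB Require Import structures.
From mathcomp Require Import all_boot all_order all_algebra.
From mathcomp Require Import all_classical all_reals all_analysis.
Set Implicit Arguments. Unset Strict Implicit. Unset Printing Implicit Defensive.
Import Order.TTheory GRing.Theory Num.Theory.
Import numFieldNormedType.Exports.
Local Open Scope ring_scope.

Section Defs.
Variables (R : realType) (n : nat).
Local Notation V := 'rV[R]_n.

Definition dotv (u v : V) : R := \sum_(i < n) u ord0 i * v ord0 i.
Definition enorm (u : V) : R := Num.sqrt (dotv u u).

Definition has_gradient (f : V -> R) (g : V -> V) : Prop :=
  forall x, differentiable f x /\ forall v, 'd f x v = dotv (g x) v.

Definition lipschitz_with (L : R) (g : V -> V) : Prop :=
  forall x y, enorm (g x - g y) <= L * enorm (x - y).

Definition convex_fun (f : V -> R) : Prop :=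
  forall (x y : V) (t : R), 0 <= t <= 1 ->
    f (t *: x + (1 - t) *: y) <= t * f x + (1 - t) * f y.

Definition bounded_below (f : V -> R) : Prop := exists c, forall x, c <= f x.
Definition ebounded_below (f : V -> \bar R) : Prop :=
  exists c : R, forall x, (c%:E <= f x)%E.

Definition coercive (f : V -> R) : Prop :=
  forall M : R, exists r : R, forall x, r < enorm x -> M < f x.
Definition ecoercive (f : V -> \bar R) : Prop :=
  forall M : R, exists r : R, forall x, r < enorm x -> (M%:E < f x)%E.

Definition proper_efun (f : V -> \bar R) : Prop :=
  (forall x, f x != -oo%E) /\ exists x, f x != +oo%E.

Definition is_argmin (phi : V -> R) (y : V) : Prop := forall y', phi y <= phi y'.
Definition is_eargmin (phi : V -> \bar R) (y : V) : Prop :=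
  forall y', (phi y <= phi y')%E.

Definition bounded_seq (u : nat -> V) : Prop := exists M : R, forall t, enorm (u t) <= M.

End Defs.

Definition Lambda (R : realType) (l L beta gamma : R) : R :=
  2^-1 * (gamma^-1 - l) - beta
  - (gamma^-1 + beta / 2) * ((-1 + 2 * gamma * l) + (1 + gamma * L) ^+ 2).

From HB Require Import structures.
From mathcomp Require Import all_boot all_order all_algebra.
From mathcomp Require Import all_classical all_reals all_analysis.
From mathcomp Require Import ring lra.
Import Order.TTheory GRing.Theory Num.Theory.
Import numFieldNormedType.Exports.
Local Open Scope ring_scope.

(* Write f_t := gradF (y_{t+1}) and h_t := gradH (y_{t+1}).  First-order optimality
   of the F-prox gives x_t = y_{t+1} + gamma f_t.  The proof follows the merit function
     Phi_t = F(y) + H(y) + G(z) + |z - (2y - gamma h - x)|^2 / (2 gamma)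
             - gamma/2 |f + h|^2                         (y, z at t+1, x at t).
   (1) Phi is nonincreasing: compare the G-prox objective at z_{t+2} and z_{t+1},
       then use weak convexity of F, the descent lemma for H and the Lipschitz bounds;
       Lambda(gamma) > 0 is exactly what makes the resulting coefficient nonpositive.
   (2) The penalty terms of Phi_t equal <f + h, z - y> + |z - y|^2/(2 gamma), so the
       descent lemma for F and H gives F(z)+H(z)+G(z)+kappa|z-y|^2 <= Phi_t <= Phi_0
       with kappa = 1/(2 gamma) - (L+beta)/2 > 0.
   (3) Lower boundedness bounds |z - y|, coercivity of one function bounds z, hence y,
       and x_t = y_{t+1} + gamma gradF(y_{t+1}) is bounded by Lipschitz continuity. *)

Section DYSBoundedness.
Set Implicit Arguments. Unset Strict Implicit. Unset Printing Implicit Defensive.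

Section Euclid.
Variables (R : realType) (n : nat).
Local Notation V := 'rV[R]_n.
Implicit Types u v w : V.

Lemma dotvC u v : dotv u v = dotv v u.
Proof. by apply: eq_bigr => i _; rewrite mulrC. Qed.

Lemma dotvDl u v w : dotv (u + v) w = dotv u w + dotv v w.
Proof. by rewrite /dotv -big_split; apply: eq_bigr => i _; rewrite !mxE mulrDl. Qed.

Lemma dotvDr u v w : dotv w (u + v) = dotv w u + dotv w v.
Proof. by rewrite dotvC dotvDl !(dotvC w). Qed.

Lemma dotvZl a u v : dotv (a *: u) v = a * dotv u v.
Proof. by rewrite /dotv mulr_sumr; apply: eq_bigr => i _; rewrite !mxE mulrA. Qed.

Lemma dotvZr a u v : dotv u (a *: v) = a * dotv u v.
Proof. by rewrite dotvC dotvZl dotvC. Qed.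

Lemma dotvNl u v : dotv (- u) v = - dotv u v.
Proof. by rewrite -scaleN1r dotvZl mulN1r. Qed.

Lemma dotvNr u v : dotv u (- v) = - dotv u v.
Proof. by rewrite dotvC dotvNl dotvC. Qed.

Lemma dotvBl u v w : dotv (u - v) w = dotv u w - dotv v w.
Proof. by rewrite dotvDl dotvNl. Qed.

Lemma dotvBr u v w : dotv w (u - v) = dotv w u - dotv w v.
Proof. by rewrite dotvDr dotvNr. Qed.

Lemma dotv0l v : dotv 0 v = 0.
Proof. by rewrite /dotv big1 // => i _; rewrite mxE mul0r. Qed.

Lemma dotvv_ge0 u : 0 <= dotv u u.
Proof. by apply: sumr_ge0 => i _; rewrite -expr2 sqr_ge0. Qed.

Lemma dotvv_eq0 u : dotv u u = 0 -> u = 0.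
Proof.
move=> h; apply/rowP => i; rewrite mxE.
have sq0 : \sum_(j < n) u ord0 j ^+ 2 = 0.
  by rewrite -[RHS]h /dotv; apply: eq_bigr => j _; rewrite expr2.
have /(_ i isT) /eqP := psumr_eq0P (fun j (_ : true) => sqr_ge0 (u ord0 j)) sq0.
by rewrite sqrf_eq0 => /eqP.
Qed.

Lemma dotv_line (u w : V) (s : R) :
  dotv (s *: u + w) (s *: u + w) = s ^+ 2 * dotv u u + 2 * s * dotv u w + dotv w w.
Proof.
rewrite !(dotvDl, dotvDr, dotvZl, dotvZr) (dotvC w u); ring.
Qed.

Lemma enorm_ge0 u : 0 <= enorm u.
Proof. exact: sqrtr_ge0. Qed.

Lemma enorm_sq u : enorm u ^+ 2 = dotv u u.
Proof. by rewrite /enorm sqr_sqrtr // dotvv_ge0. Qed.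

Lemma enorm_gt0 u : u != 0 -> 0 < enorm u.
Proof.
move=> u0; rewrite lt_def enorm_ge0 andbT; apply: contraNneq u0 => nu0.
by apply/eqP/dotvv_eq0; rewrite -enorm_sq nu0 expr0n.
Qed.

Lemma enormN u : enorm (- u) = enorm u.
Proof. by rewrite /enorm dotvNl dotvNr opprK. Qed.

Lemma enormZ a u : enorm (a *: u) = `|a| * enorm u.
Proof.
by rewrite /enorm dotvZl dotvZr mulrA -expr2 sqrtrM ?sqr_ge0 // sqrtr_sqr.
Qed.

Lemma cauchy_schwarz u v : dotv u v <= enorm u * enorm v.
Proof.
have [->|u0] := eqVneq u 0; first by rewrite dotv0l /enorm dotv0l sqrtr0 mul0r.
have [->|v0] := eqVneq v 0.
  by rewrite dotvC dotv0l /enorm dotv0l sqrtr0 mulr0.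
have nu := enorm_gt0 u0; have nv := enorm_gt0 v0.
(* expand 0 <= | |v| u - |u| v |^2 and divide by 2 |u| |v| *)
have := dotvv_ge0 (enorm v *: u - enorm u *: v).
rewrite !(dotvBl, dotvBr, dotvZl, dotvZr) -!enorm_sq (dotvC v u) => h.
have : 2 * (enorm v * enorm u) * dotv u v
       <= 2 * (enorm v * enorm u) * (enorm u * enorm v) by nra.
by rewrite ler_pM2l ?mulr_gt0.
Qed.

Lemma enormD u v : enorm (u + v) <= enorm u + enorm v.
Proof.
have cs := cauchy_schwarz u v.
have sq : enorm (u + v) ^+ 2 = enorm u ^+ 2 + 2 * dotv u v + enorm v ^+ 2.
  by rewrite !enorm_sq !(dotvDl, dotvDr) (dotvC v u); ring.
have := enorm_ge0 (u + v); have := enorm_ge0 u; have := enorm_ge0 v; nra.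
Qed.

Lemma bounded_seq_trivial (u : nat -> V) : ~ (exists e : V, e != 0) -> bounded_seq u.
Proof.
move=> no_nz; exists 0 => t; have -> : u t = 0.
  by apply: contrapT => ut0; apply: no_nz; exists (u t); apply/eqP.
by rewrite /enorm dotv0l sqrtr0.
Qed.

Lemma bounded_seq_succ (u : nat -> V) (M : R) :
  (forall t, enorm (u t.+1) <= M) -> bounded_seq u.
Proof.
move=> hM; exists (enorm (u 0%N) + M) => -[|t].
  by rewrite lerDl (le_trans (enorm_ge0 _) (hM 0%N)).
by rewrite (le_trans (hM t)) // lerDr enorm_ge0.
Qed.

Lemma lipschitz_const_ge0 (g : V -> V) (K : R) (e : V) :
  e != 0 -> lipschitz_with K g -> 0 <= K.
Proof.
move=> e0 /(_ e 0); rewrite subr0 => h.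
have := enorm_gt0 e0; have := enorm_ge0 (g e - g 0); nra.
Qed.

Lemma lipschitz_growth (g : V -> V) (K : R) (v : V) : lipschitz_with K g ->
  enorm (g v) <= enorm (g 0) + K * enorm v.
Proof.
move=> /(_ v 0); rewrite subr0 => lip.
rewrite -[g v](addrNK (g 0)) addrC.
by apply: le_trans (enormD _ _) _; rewrite lerD2l.
Qed.

Lemma coercive_sublevel_bounded (f : V -> R) (M : R) (u : nat -> V) : coercive f ->
  (forall t, f (u t) <= M) -> exists r, forall t, enorm (u t) <= r.
Proof.
move=> /(_ M) [r hr] hM; exists r => t.
by rewrite leNgt; apply/negP => /hr; rewrite ltNge hM.
Qed.

Lemma ecoercive_sublevel_bounded (f : V -> \bar R) (M : R) (u : nat -> V) : ecoercive f ->
  (forall t, (f (u t) <= M%:E)%E) -> exists r, forall t, enorm (u t) <= r.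
Proof.
move=> /(_ M) [r hr] hM; exists r => t.
by rewrite leNgt; apply/negP => /hr; rewrite ltNge hM.
Qed.

End Euclid.

Section Calculus.
Local Open Scope classical_set_scope.
Local Open Scope ring_scope.
Variables (R : realType) (n : nat).
Local Notation V := 'rV[R]_n.

Lemma difference_quotient_cvg (f : V -> R) (g : V -> V) (a d : V) :
  has_gradient f g ->
  (fun h : R => h^-1 * (f (h *: d + a) - f a)) @ 0^' --> dotv (g a) d.
Proof.
move=> /(_ a) [df dv]; rewrite -dv -deriveE //.
exact: (@diff_derivable _ _ _ f a d df).
Qed.

Lemma dnbhs_to_right (f : R -> R) (l : R) : f @ (0 : R)^' --> l -> f @ (0 : R)^'+ --> l.
Proof.
move=> cf A /cf /(@nbhs_ballP _ R^o) [_ /posnumP[e] xe_A].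
by exists e%:num => //= y xe_y; rewrite lt_def => /andP [xney _]; apply: xe_A.
Qed.

Lemma dir_deriv_le (f : V -> R) (g : V -> V) (a d : V) (A B : R) :
  has_gradient f g ->
  (forall s : R, 0 < s -> s <= 1 -> f (s *: d + a) - f a <= s * A + s ^+ 2 * B) ->
  dotv (g a) d <= A.
Proof.
move=> hf hb.
have quot := dnbhs_to_right (difference_quotient_cvg (a := a) (d := d) hf).
have bound : (fun s : R => A + s * B) @ 0^'+ --> A.
  apply: cvg_at_right_filter.
  rewrite -[X in _ --> X]addr0 -[X in _ --> A + X](mul0r B).
  by apply: cvgD; [exact: cvg_cst | apply: cvgMl; exact: cvg_id].
apply: (ler_cvg_to quot bound); near=> s.
have s0 : 0 < s by near: s; exact: nbhs_right_gt.
have s1 : s <= 1 by near: s; exact: nbhs_right_le.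
rewrite ler_pdivrMl //; apply: (le_trans (hb s s0 s1)).
by rewrite mulrDr expr2 mulrA.
Unshelve. all: by end_near.
Qed.

Lemma dir_deriv_ge (f : V -> R) (g : V -> V) (a d : V) (A B : R) :
  has_gradient f g ->
  (forall s : R, 0 < s -> s <= 1 -> s * A - s ^+ 2 * B <= f (s *: d + a) - f a) ->
  A <= dotv (g a) d.
Proof.
move=> hf hb.
have quot := dnbhs_to_right (difference_quotient_cvg (a := a) (d := d) hf).
have bound : (fun s : R => A - s * B) @ 0^'+ --> A.
  apply: cvg_at_right_filter.
  rewrite -[X in _ --> X]subr0 -[X in _ --> A - X](mul0r B).
  by apply: cvgB; [exact: cvg_cst | apply: cvgMl; exact: cvg_id].
apply: (ler_cvg_to bound quot); near=> s.
have s0 : 0 < s by near: s; exact: nbhs_right_gt.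
have s1 : s <= 1 by near: s; exact: nbhs_right_le.
rewrite ler_pdivlMl //; apply: le_trans (hb s s0 s1).
by rewrite mulrBr expr2 mulrA.
Unshelve. all: by end_near.
Qed.

Lemma is_derive_line (f : V -> R) (g : V -> V) (v d : V) (s : R) : has_gradient f g ->
  is_derive s 1 (fun s : R => f (s *: d + v)) (dotv (g (s *: d + v)) d).
Proof.
move=> hf.
have quot := difference_quotient_cvg (a := s *: d + v) (d := d) hf.
have E : (fun h : R => h^-1 *: (((fun s : R => f (s *: d + v)) \o shift s) (h *: 1)
                                - f (s *: d + v)))
   = (fun h : R => h^-1 * (f (h *: d + (s *: d + v)) - f (s *: d + v))).
  apply/funext => h /=.
  have -> : h%:A = h :> R by rewrite /GRing.scale /= mulr1.
  by rewrite scalerDl addrA.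
apply: DeriveDef; last by rewrite /derive E; exact: cvg_lim quot.
by rewrite /derivable E; apply/cvg_ex; eexists; exact: quot.
Qed.

(* Descent lemma: a K-Lipschitz gradient gives the quadratic upper bound
   f (v + d) <= f v + <g v, d> + K/2 |d|^2.  The gap p(s) along the segment has
   derivative <g (s d + v) - g v, d> - s K |d|^2 <= 0, hence p(1) <= p(0). *)
Lemma descent_lemma (f : V -> R) (g : V -> V) (K : R) (v d : V) :
  has_gradient f g -> lipschitz_with K g ->
  f (v + d) <= f v + dotv (g v) d + K / 2 * enorm d ^+ 2.
Proof.
move=> hf hl.
set c1 := dotv (g v) d; set c2 := K / 2 * enorm d ^+ 2.
pose p : R -> R := (fun s : R => f (s *: d + v)) - (cst c1 * id + cst c2 * (id ^+ 2)).
have dp (s : R) : is_derive s (1 : R) p (dotv (g (s *: d + v)) d - (c1 + 2 * s * c2)).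
  apply: is_derive_eq; first by apply: is_deriveB; exact: is_derive_line.
  have alg (k : R) : k%:A = k by rewrite /GRing.scale /= mulr1.
  by rewrite /cst /= !scaler0 !addr0 !alg /GRing.scale /= expr1 mulrC mulrA.
have p_cont : {within `[0, 1], continuous p}.
  apply: continuous_subspaceT => s; apply: differentiable_continuous.
  by apply/derivable1_diffP; exact: (@ex_derive _ _ _ _ _ _ _ (dp s)).
have p'_le0 : forall s : R, s \in `]0, 1[ -> (p^`())%classic s <= 0.
  move=> s /[!in_itv] /= /andP [s0 s1].
  rewrite derive1E (@derive_val _ _ _ _ _ _ _ (dp s)).
  have cs := cauchy_schwarz (g (s *: d + v) - g v) d.
  have lip := hl (s *: d + v) v.
  rewrite addrK enormZ (ger0_norm (ltW s0)) in lip.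
  have gap : dotv (g (s *: d + v)) d - c1 = dotv (g (s *: d + v) - g v) d.
    by rewrite dotvBl.
  have := enorm_ge0 d; rewrite /c2; nra.
have := @ler0_derive1_le_cc R p 0 1 (fun s _ => @ex_derive _ _ _ _ _ _ _ (dp s))
  p'_le0 p_cont 1 0.
rewrite !in_itv /= !lexx ler01 => /(_ isT isT isT).
rewrite /p /cst !fctE /= scale1r scale0r add0r expr1n expr0n /= !mulr1 !mulr0.
move=> h; rewrite addrC; lra.
Qed.

End Calculus.

Section WeakConvexity.
Variables (R : realType) (n : nat).
Local Notation V := 'rV[R]_n.
Variables (F : V -> R) (gradF : V -> V) (l : R).
Hypotheses (hF : has_gradient F gradF)
  (hFconv : convex_fun (fun x => F x + l / 2 * enorm x ^+ 2)).

Lemma weak_convexity_gradient (v d : V) :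
  dotv (gradF v) d <= F (v + d) - F v + l / 2 * enorm d ^+ 2.
Proof.
apply: (dir_deriv_le (B := - (l / 2 * enorm d ^+ 2)) hF) => s s0 s1.
have := hFconv (v + d) v (t := s); rewrite (ltW s0) s1 => /(_ isT).
have -> : s *: (v + d) + (1 - s) *: v = s *: d + v.
  by rewrite scalerDr scalerBl scale1r addrC addrA subrK addrC.
rewrite !enorm_sq !(dotvDl, dotvDr, dotvZl, dotvZr) (dotvC d v) => h; nra.
Qed.

Lemma weak_convexity_hypomonotone (v d : V) :
  - (l * enorm d ^+ 2) <= dotv (gradF (v + d) - gradF v) d.
Proof.
have w1 := weak_convexity_gradient v d.
have w2 := weak_convexity_gradient (v + d) (- d).
rewrite addrK enormN dotvNr in w2; rewrite dotvBl; lra.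
Qed.

Lemma weak_convexity_modulus_ge (L : R) (e : V) : lipschitz_with L gradF -> e != 0 ->
  - L <= l.
Proof.
move=> hFL e0.
have hypo := weak_convexity_hypomonotone 0 e; rewrite add0r in hypo.
have cs := cauchy_schwarz (gradF e - gradF 0) e.
have lip := hFL e 0; rewrite subr0 in lip.
have ne := enorm_gt0 e0; have := enorm_ge0 (gradF e - gradF 0).
have : 0 < enorm e ^+ 2 by rewrite exprn_gt0.
nra.
Qed.

Lemma prox_optimality (g : R) (x y : V) : 0 < g ->
  is_argmin (fun v => F v + (2 * g)^-1 * enorm (v - x) ^+ 2) y ->
  gradF y = g^-1 *: (x - y).
Proof.
move=> g0 hmin.
pose e := gradF y - g^-1 *: (x - y).
have var : g^-1 * dotv (x - y) (- e) <= dotv (gradF y) (- e).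
  apply: (dir_deriv_ge (B := (2 * g)^-1 * enorm (- e) ^+ 2) hF) => s s0 s1.
  have := hmin (s *: - e + y); rewrite !enorm_sq.
  rewrite -addrA dotv_line.
  have -> : dotv (x - y) (- e) = - dotv (- e) (y - x).
    by rewrite -(opprB y x) !(dotvNl, dotvNr) !opprK dotvC.
  have -> : g^-1 = 2 * (2 * g)^-1 by rewrite invfM mulrA mulrV ?unitfE // mul1r.
  have : 0 < (2 * g)^-1 by rewrite invr_gt0 mulr_gt0.
  move: (dotv (- e) (- e)) (dotv (- e) (y - x)) (dotv (y - x) (y - x)) => a b c.
  move=> ? ?; nra.
have : 0 <= dotv e (- e) by rewrite /e dotvBl dotvZl; lra.
rewrite dotvNr oppr_ge0 => ee_le0.
have /dotvv_eq0 /eqP : dotv e e = 0 by apply/eqP; rewrite eq_le ee_le0 dotvv_ge0.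
by rewrite subr_eq0 => /eqP.
Qed.

End WeakConvexity.

(* Lambda(gamma) > 0 in the scale-free variables a = gamma l, b = gamma L,
   c = gamma beta: it dominates the step coefficient and forces b + c < 1. *)
Lemma scaled_stepsize_bounds (R : realType) (a b c : R) :
  0 <= b -> 0 <= c -> - b <= a ->
  0 < 2^-1 * (1 - a) - c - (1 + c / 2) * ((-1 + 2 * a) + (1 + b) ^+ 2) ->
  (a + c) / 2 - 2^-1 + b ^+ 2 + c * b <= 0 /\ b + c < 1.
Proof.
move=> b0 c0 ab h.
have slack : 0 <= c / 2 * (1 - b) ^+ 2 + 2 * (a + b) * (1 + c / 2).
  apply: addr_ge0; first by apply: mulr_ge0; [lra | exact: sqr_ge0].
  by apply: mulr_ge0; lra.
have split_coef : (a + c) / 2 - 2^-1 + b ^+ 2 + c * b =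
   - (2^-1 * (1 - a) - c - (1 + c / 2) * ((-1 + 2 * a) + (1 + b) ^+ 2))
   - (c / 2 * (1 - b) ^+ 2 + 2 * (a + b) * (1 + c / 2)) by field.
split; first lra.
rewrite ltNge; apply/negP => bc1.
have : 0 < 2^-1 + b / 2 - c - (1 + c / 2) * b ^+ 2 by apply: lt_le_trans h _; nra.
nra.
Qed.

Lemma stepsize_bounds (R : realType) (l L beta g : R) :
  0 < g -> 0 <= L -> 0 <= beta -> - L <= l -> 0 < Lambda l L beta g ->
  (l + beta) / 2 - (2 * g)^-1 + g * L ^+ 2 + g * beta * L <= 0 /\ L + beta < g^-1.
Proof.
move=> g0 L0 b0 lL hL; have gn0 := lt0r_neq0 g0.
have gl : - (g * L) <= g * l by rewrite -mulrN ler_wpM2l // ltW.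
have scaled : 0 < 2^-1 * (1 - g * l) - g * beta
    - (1 + g * beta / 2) * (-1 + 2 * (g * l) + (1 + g * L) ^+ 2).
  have -> : 2^-1 * (1 - g * l) - g * beta
      - (1 + g * beta / 2) * (-1 + 2 * (g * l) + (1 + g * L) ^+ 2)
      = g * Lambda l L beta g by rewrite /Lambda; field.
  exact: mulr_gt0.
have [coef sum] := scaled_stepsize_bounds (mulr_ge0 (ltW g0) L0)
  (mulr_ge0 (ltW g0) b0) gl scaled.
split.
  rewrite -(pmulr_rle0 _ g0); apply: le_trans coef; rewrite le_eqVlt; apply/orP; left.
  by apply/eqP; field.
by rewrite -(ltr_pM2l g0) mulrV ?unitfE // mulrDr.
Qed.

Section MeritIdentities.
Variables (R : realType) (n : nat).
Local Notation V := 'rV[R]_n.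

Ltac coordinatewise := rewrite !enorm_sq /dotv;
  repeat (rewrite mulr_sumr || rewrite -sumrN || rewrite -big_split /=);
  apply: eq_bigr => i _; rewrite !mxE.

Lemma merit_penalty_identity (g : R) (x y z f h : V) : g != 0 -> x = y + g *: f ->
  (2 * g)^-1 * enorm (z - (2 *: y - g *: h - x)) ^+ 2 - g / 2 * enorm (f + h) ^+ 2
  = dotv (f + h) (z - y) + (2 * g)^-1 * enorm (z - y) ^+ 2.
Proof. by move=> g0 ->; coordinatewise; field. Qed.

(* One DYS step (x, y, z) -> (xp, yp): the penalty at the new point minus the
   penalty identity at the old one, plus the weak-convexity and descent slacks,
   collapses to terms in |yp - y|, |fp - f| and <hp - h, fp - f>. *)
Lemma merit_step_identity (g l b : R) (x y z f h xp yp fp hp : V) : g != 0 ->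
  x = y + g *: f -> xp = x + (z - y) -> fp = g^-1 *: (xp - yp) ->
  (2 * g)^-1 * enorm (z - (2 *: yp - g *: hp - xp)) ^+ 2 - g / 2 * enorm (fp + hp) ^+ 2
  - (dotv (f + h) (z - y) + (2 * g)^-1 * enorm (z - y) ^+ 2)
  + (l / 2 * enorm (y - yp) ^+ 2 - dotv fp (y - yp))
  + (dotv h (yp - y) + b / 2 * enorm (yp - y) ^+ 2)
  = (l + b) / 2 * enorm (yp - y) ^+ 2 - (2 * g)^-1 * enorm (yp - y) ^+ 2
    + g * enorm (fp - f) ^+ 2 + g * dotv (hp - h) (fp - f).
Proof. by move=> g0 -> -> ->; coordinatewise; field. Qed.

End MeritIdentities.

Lemma ereal_finite_below (R : realType) (a b : \bar R) (r s : R) :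
  a != -oo%E -> b != -oo%E -> b != +oo%E -> (a + r%:E <= b + s%:E)%E -> a = (fine a)%:E.
Proof. by case: a => [a'| |] //; case: b. Qed.

Section DYSIteration.
Variables (R : realType) (n : nat).
Local Notation V := 'rV[R]_n.
Variables (F : V -> R) (gradF : V -> V) (G : V -> \bar R) (H : V -> R) (gradH : V -> V).
Variables (L beta l gamma : R).
Hypotheses (hF : has_gradient F gradF) (hFL : lipschitz_with L gradF)
  (hGp : proper_efun G) (hH : has_gradient H gradH) (hHL : lipschitz_with beta gradH)
  (hFconv : convex_fun (fun x => F x + l / 2 * enorm x ^+ 2)) (hgamma : 0 < gamma)
  (hL0 : 0 <= L)
  (hcoef : (l + beta) / 2 - (2 * gamma)^-1 + gamma * L ^+ 2 + gamma * beta * L <= 0)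
  (hLb : L + beta < gamma^-1).
Variables (x y z : nat -> V).
Hypotheses
  (hy : forall t, is_argmin
     (fun v => F v + (2 * gamma)^-1 * enorm (v - x t) ^+ 2) (y t.+1))
  (hz : forall t, is_eargmin
     (fun v => (G v + ((2 * gamma)^-1 *
        enorm (v - (2 *: y t.+1 - gamma *: gradH (y t.+1) - x t)) ^+ 2)%:E)%E)
     (z t.+1))
  (hx : forall t, x t.+1 = x t + (z t.+1 - y t.+1)).
Arguments hy : clear implicits.
Arguments hz : clear implicits.
Arguments hx : clear implicits.

Lemma gradF_at_y t : gradF (y t.+1) = gamma^-1 *: (x t - y t.+1).
Proof. exact: (prox_optimality hF hgamma (hy t)). Qed.

Lemma x_from_y t : x t = y t.+1 + gamma *: gradF (y t.+1).
Proof.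
by rewrite gradF_at_y scalerA mulrV ?unitfE ?lt0r_neq0 // scale1r addrC subrK.
Qed.

(* G is finite at every z_{t+1}: compare the G-prox objective with a point of dom G. *)
Definition Gz t := fine (G (z t.+1)).

Lemma G_at_z t : G (z t.+1) = (Gz t)%:E.
Proof.
have [p Gp] := hGp.2.
exact: ereal_finite_below (hGp.1 _) (hGp.1 _) Gp (hz t p).
Qed.

Definition merit t := F (y t.+1) + H (y t.+1) + Gz t
  + (2 * gamma)^-1 * enorm (z t.+1 - (2 *: y t.+1 - gamma *: gradH (y t.+1) - x t)) ^+ 2
  - gamma / 2 * enorm (gradF (y t.+1) + gradH (y t.+1)) ^+ 2.

Lemma gradient_cross_bound (u v : V) :
  gamma * enorm (gradF v - gradF u) ^+ 2
  + gamma * dotv (gradH v - gradH u) (gradF v - gradF u)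
  <= gamma * (L ^+ 2 + beta * L) * enorm (v - u) ^+ 2.
Proof.
have lipF := hFL v u; have lipH := hHL v u.
have cs := cauchy_schwarz (gradH v - gradH u) (gradF v - gradF u).
have := enorm_ge0 (gradF v - gradF u); have := enorm_ge0 (gradH v - gradH u).
have := enorm_ge0 (v - u).
move: lipF lipH cs.
move: (enorm (v - u)) (enorm (gradF v - gradF u)) (enorm (gradH v - gradH u)) => r nf nh.
move=> lipF lipH cs r0 nh0 nf0.
have nf2 : nf ^+ 2 <= L ^+ 2 * r ^+ 2 by nra.
have cross : nh * nf <= beta * L * r ^+ 2 by nra.
have g0 := ltW hgamma.
have := ler_wpM2l g0 nf2; have := ler_wpM2l g0 (le_trans cs cross); nra.
Qed.

Lemma merit_nonincreasing t : merit t.+1 <= merit t.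
Proof.
have gn0 := lt0r_neq0 hgamma.
have prox_G := hz t.+1 (z t.+1).
rewrite /= G_at_z (G_at_z t) -!EFinD lee_fin in prox_G.
have wconv := weak_convexity_gradient hF hFconv (y t.+2) (y t.+1 - y t.+2).
rewrite [y t.+2 + _]addrC subrK in wconv.
have desc := descent_lemma (y t.+1) (y t.+2 - y t.+1) hH hHL.
rewrite [y t.+1 + _]addrC subrK in desc.
have step := merit_step_identity l beta (gradH (y t.+1)) (gradH (y t.+2)) gn0
  (x_from_y t) (hx t) (gradF_at_y t.+1).
have pen := merit_penalty_identity (z t.+1) (gradH (y t.+1)) gn0 (x_from_y t).
have grad := gradient_cross_bound (y t.+1) (y t.+2).
have coef : ((l + beta) / 2 - (2 * gamma)^-1 + gamma * L ^+ 2 + gamma * beta * L)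
            * enorm (y t.+2 - y t.+1) ^+ 2 <= 0 by rewrite mulr_le0_ge0 ?sqr_ge0.
rewrite /merit; lra.
Qed.

Lemma merit_le_initial t : merit t <= merit 0.
Proof. by elim: t => [|t ih] //; exact: le_trans (merit_nonincreasing t) ih. Qed.

Definition kappa := (2 * gamma)^-1 - (L + beta) / 2.

Lemma kappa_gt0 : 0 < kappa.
Proof. by rewrite /kappa invfM; have := hLb; lra. Qed.

Lemma merit_lower_bound t :
  F (z t.+1) + H (z t.+1) + Gz t + kappa * enorm (z t.+1 - y t.+1) ^+ 2 <= merit t.
Proof.
have pen := merit_penalty_identity (z t.+1) (gradH (y t.+1))
  (lt0r_neq0 hgamma) (x_from_y t).
have descF := descent_lemma (y t.+1) (z t.+1 - y t.+1) hF hFL.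
have descH := descent_lemma (y t.+1) (z t.+1 - y t.+1) hH hHL.
rewrite [y t.+1 + _]addrC subrK in descF descH; rewrite dotvDl in pen.
rewrite /merit /kappa; lra.
Qed.


Section Boundedness.
Hypotheses (hFb : bounded_below F) (hGb : ebounded_below G) (hHb : bounded_below H)
  (hcoer : coercive F \/ ecoercive G \/ coercive H).

Lemma energy_at_z t :
  F (z t.+1) + H (z t.+1) + Gz t + kappa * enorm (z t.+1 - y t.+1) ^+ 2 <= merit 0.
Proof. exact: le_trans (merit_lower_bound t) (merit_le_initial t). Qed.

Lemma Gz_bounded_below : exists c, forall t, c <= Gz t.
Proof. by have [c hc] := hGb; exists c => t; have := hc (z t.+1); rewrite G_at_z. Qed.

Lemma gap_bounded : exists B, forall t, enorm (z t.+1 - y t.+1) <= B.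
Proof.
have [[mF hmF] [mH hmH]] := (hFb, hHb); have [mG hmG] := Gz_bounded_below.
exists (1 + (merit 0 - mF - mG - mH) / kappa) => t.
have gap_sq : enorm (z t.+1 - y t.+1) ^+ 2 <= (merit 0 - mF - mG - mH) / kappa.
  rewrite ler_pdivlMr ?kappa_gt0 // mulrC.
  have := energy_at_z t; have := hmF (z t.+1); have := hmH (z t.+1); have := hmG t.
  lra.
have := enorm_ge0 (z t.+1 - y t.+1); nra.
Qed.

(* Step (3b): the coercive function is bounded above along z, so z is bounded. *)
Lemma z_bounded : exists M, forall t, enorm (z t.+1) <= M.
Proof.
have [[mF hmF] [mH hmH]] := (hFb, hHb); have [mG hmG] := Gz_bounded_below.
have gap_ge0 t : 0 <= kappa * enorm (z t.+1 - y t.+1) ^+ 2.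
  by rewrite mulr_ge0 ?sqr_ge0 // ltW // kappa_gt0.
have energy t := energy_at_z t.
case: hcoer => [coerF|[coerG|coerH]].
- apply: (coercive_sublevel_bounded (M := merit 0 - mG - mH) coerF) => t.
  have := energy t; have := gap_ge0 t; have := hmH (z t.+1); have := hmG t; lra.
- apply: (ecoercive_sublevel_bounded (M := merit 0 - mF - mH) coerG) => t.
  rewrite G_at_z lee_fin.
  have := energy t; have := gap_ge0 t; have := hmF (z t.+1); have := hmH (z t.+1); lra.
- apply: (coercive_sublevel_bounded (M := merit 0 - mF - mG) coerH) => t.
  have := energy t; have := gap_ge0 t; have := hmF (z t.+1); have := hmG t; lra.
Qed.

(* Step (3c): y = z - (z - y) and x_t = y_{t+1} + gamma gradF(y_{t+1}). *)
Lemma dys_iterates_bounded : bounded_seq x /\ bounded_seq y /\ bounded_seq z.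
Proof.
have [B hB] := gap_bounded; have [M hM] := z_bounded.
have hy_bd t : enorm (y t.+1) <= M + B.
  rewrite -[y t.+1](subKr (z t.+1)); apply: le_trans (enormD _ _) _.
  by rewrite enormN lerD.
split; last by split; [exact: bounded_seq_succ hy_bd | exact: bounded_seq_succ hM].
exists (M + B + gamma * (enorm (gradF 0) + L * (M + B))) => t.
rewrite x_from_y; apply: le_trans (enormD _ _) _.
rewrite enormZ (gtr0_norm hgamma) lerD //; apply: ler_wpM2l; first exact: ltW.
apply: le_trans (lipschitz_growth _ hFL) _; rewrite lerD2l.
exact: ler_wpM2l.
Qed.

End Boundedness.

End DYSIteration.

End DYSBoundedness.

Theorem mainTheorem3 (R : realType) (n : nat)
    (F : 'rV[R]_n -> R) (gradF : 'rV[R]_n -> 'rV[R]_n)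
    (G : 'rV[R]_n -> \bar R)
    (H : 'rV[R]_n -> R) (gradH : 'rV[R]_n -> 'rV[R]_n)
    (L beta l gamma : R)
    (* (a1) *)
    (hF : has_gradient F gradF) (hFL : lipschitz_with L gradF)
    (* (a2) *)
    (hGp : proper_efun G) (hGl : lower_semicontinuous G)
    (hGprox : forall (x : 'rV[R]_n) (g : R), 0 < g ->
       exists y, is_eargmin (fun y => (G y + ((2 * g)^-1 * enorm (y - x) ^+ 2)%:E)%E) y)
    (* (a3) *)
    (hH : has_gradient H gradH) (hHL : lipschitz_with beta gradH)
    (* weak convexity of F *)
    (hFconv : convex_fun (fun x => F x + l / 2 * enorm x ^+ 2))
    (hgamma : 0 < gamma) (hLambda : 0 < Lambda l L beta gamma)
    (hFb : bounded_below F) (hGb : ebounded_below G) (hHb : bounded_below H)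
    (hcoer : coercive F \/ ecoercive G \/ coercive H)
    (* DYS iteration; x 0 arbitrary, y 0 and z 0 are unconstrained *)
    (x y z : nat -> 'rV[R]_n)
    (hy : forall t, is_argmin
            (fun v => F v + (2 * gamma)^-1 * enorm (v - x t) ^+ 2) (y t.+1))
    (hz : forall t, is_eargmin
            (fun v => (G v + ((2 * gamma)^-1 *
               enorm (v - (2 *: y t.+1 - gamma *: gradH (y t.+1) - x t)) ^+ 2)%:E)%E)
            (z t.+1))
    (hx : forall t, x t.+1 = x t + (z t.+1 - y t.+1)) :
  bounded_seq x /\ bounded_seq y /\ bounded_seq z.
Proof.
have [[e e0]|trivial] := pselect (exists e : 'rV[R]_n, e != 0); last first.
  by split; [|split]; exact: bounded_seq_trivial.
have L0 := lipschitz_const_ge0 e0 hFL.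
have beta0 := lipschitz_const_ge0 e0 hHL.
have lL := weak_convexity_modulus_ge hF hFconv hFL e0.
have [coef sumLb] := stepsize_bounds hgamma L0 beta0 lL hLambda.
exact: (dys_iterates_bounded hF hFL hGp hH hHL hFconv hgamma L0 coef sumLb hy hz hx
  hFb hGb hHb hcoer).
Qed.
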